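(* Let $\lambda$ be a partition and $a,b,c,d\in\mathbb F$. Then: (i) $\langle v_\lambda,\Xi_{aa}v_\lambda\rangle=\sum_{x\in C_\lambda}\mathrm{sgn}(x)\,\delta_{a,x}$; (ii) $\langle v_\lambda,\Xi_{abcd}v_\lambda\rangle\neq0$ only if ($a=b$ and $c=d$) or ($a=d$ and $b=c$); (iii) if $a\ne b$, then $\langle v_\lambda,\Xi_{abba}v_\lambda\rangle=-\sum_{x,x'\in C_\lambda}\mathrm{sgn}(x\,x')\,\delta_{a,x}\,\delta_{b,x'}$.
   Context: $\mathbb F=\mathbb Z+\frac12$. $\mathsf F$ has orthonormal basis $v_S$ for strictly decreasing sequences $S=(s_i)_{i\ge1}\subset\mathbb F$ with $s_{i+1}=s_i-1$ for large $i$ (think $v_S=\underline{s_1}\wedge\underline{s_2}\wedge\cdots$). For $k\in\mathbb F$: $\psi_kv_S=0$ if $k\in S$, else $\psi_kv_S=(-1)^{\#\{i:s_i>k\}}v_{S\cup\{k\}}$; $\psi^*_kv_S=(-1)^{i-1}v_{S\setminus\{s_i\}}$ if $k=s_i$, else $0$. For $a>0$, $\psi_a,\psi^*_{-a}$ are creation and $\psi_{-a},\psi^*_a$ annihilation operators; $:\phi_1\cdots\phi_k:=\mathrm{sgn}(\sigma)\phi_{\sigma(1)}\cdots\phi_{\sigma(k)}$ for any permutation $\sigma$ moving creation operators to the left of annihilation operators. $\Xi_{ab}=:\psi_a\psi^*_b:$, $\Xi_{abcd}=:\psi_a\psi^*_b\psi_c\psi^*_d:$. For a partition $\lambda$, $v_\lambda=v_{S_\lambda}$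 with $S_\lambda=(\lambda_j-j+\frac12)_{j\ge1}$. Modified Frobenius coordinates: if $d$ is the number of $i$ with $\lambda_i\ge i$, put $c_i=\lambda_i-i+\frac12$, $c_i^*=-(\lambda'_i-i)-\frac12$ ($i=1,\dots,d$, $\lambda'$ the transpose partition), and $C_\lambda=\{c_1,\dots,c_d,c^*_1,\dots,c^*_d\}$. *)

From HB Require Import structures.
From mathcomp Require Import all_boot all_order all_algebra.
From mathcomp Require Import finmap.
Set Implicit Arguments. Unset Strict Implicit. Unset Printing Implicit Defensive.
Import Order.TTheory GRing.Theory Num.Theory.
Local Open Scope ring_scope.

(* Half-integers.  An element of F = Z + 1/2 is encoded by the integer n,   *)
(* standing for n + 1/2.  Hence  n + 1/2 > 0  <->  0 <= n.                  *)
Definition halfpos (n : int) : bool := (0 <= n).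

Definition sgnF (n : int) : int := if halfpos n then 1 else -1.

(* Basis of the semi-infinite wedge space.  An index set S (strictly        *)
(* decreasing sequence, eventually decreasing by steps of 1) is the same as *)
(* a subset of F that is bounded above and contains all sufficiently small  *)
(* elements.  Such S is encoded (bijectively) by the FINITE set             *)
(*     D = S (symmetric difference) {-1/2, -3/2, ...}                       *)
(* of (encoded) half-integers.                                              *)
Definition state := {fset int}.

Definition memS (D : state) (k : int) : bool := (k < 0) (+) (k \in D).

Definition toggle (D : state) (k : int) : state :=
  if k \in D then (D `\ k)%fset else (k |` D)%fset.

(* #{ s in S : s > k }.  All such s lie in the window k+1, ..., k+N. *)
Definition cntAbove (D : state) (k : int) : nat :=
  let N := maxn (\max_(d <- D) `|d - k|%N) `|k|%N in
  count (memS D) [seq k + 1 + (i%:Z) | i <- iota 0 N].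

Inductive op := Psi of int | PsiS of int.

(* Action on a signed basis vector  c * v_S  (None encodes the zero vector). *)
Definition act (o : op) (x : option (int * state)) : option (int * state) :=
  match x with
  | None => None
  | Some (c, D) =>
    match o with
    | Psi k => if memS D k then None
               else Some (c * (-1) ^+ cntAbove D k, toggle D k)
    | PsiS k => if memS D k then Some (c * (-1) ^+ cntAbove D k, toggle D k)
                else None
    end
  end.

(* phi_1 phi_2 ... phi_m v_S  (phi_m acts first) *)
Definition apply_word (w : seq op) (D : state) : option (int * state) :=
  foldr act (Some (1, D)) w.

Definition diag_elem (w : seq op) (D : state) : int :=
  match apply_word w D with
  | Some (c, D') => if D' == D then c else 0
  | None => 0
  end.

Definition is_creation (o : op) : bool :=
  match o with Psi k => halfpos k | PsiS k => ~~ halfpos k end.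

(* Normal ordering: the stable reordering moving creation operators to the *)
(* left, with the sign of that permutation ((-1)^(number of pairs i<j with *)
(* phi_i annihilation and phi_j creation)).                                 *)
Fixpoint ninv (w : seq op) : nat :=
  match w with
  | [::] => 0
  | o :: w' => (if is_creation o then 0 else count is_creation w') + ninv w'
  end.

Definition normal_word (w : seq op) : seq op :=
  filter is_creation w ++ filter (predC is_creation) w.

Definition normal_diag (w : seq op) (D : state) : int :=
  (-1) ^+ ninv w * diag_elem (normal_word w) D.

Definition Xi2 (a b : int) : seq op := [:: Psi a; PsiS b].
Definition Xi4 (a b c d : int) : seq op := [:: Psi a; PsiS b; Psi c; PsiS d].

(* Partitions: weakly decreasing sequences of naturals (trailing zeros are  *)
(* harmless); lambda_j = nth 0 l (j-1), which is 0 for j > size l.         *)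
Definition is_partition (l : seq nat) : bool := sorted geq l.

Definition part (l : seq nat) (j : nat) : nat := nth 0%N l j.-1.

(* membership of (n + 1/2) in S_lambda = (lambda_j - j + 1/2)_{j>=1}:      *)
(* either j <= size l, or j > size l where lambda_j - j = -j.             *)
Definition memSlam (l : seq nat) (n : int) : bool :=
  has (fun j : nat => (part l j)%:Z - j%:Z == n) (iota 1 (size l))
  || ((n < 0) && ((size l)%:Z < - n)).

(* the finite encoding D of S_lambda (differences with the vacuum occur  *)
(* only in the window [-size l, sumn l]).                                  *)
Definition Slam (l : seq nat) : state :=
  [fset n in [seq (i%:Z - (size l)%:Z) | i <- iota 0 (size l + sumn l + 1)]
     | memSlam l n != (n < 0)]%fset.

Definition partT (l : seq nat) (i : nat) : nat := count (fun x => i <= x)%N l.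

Definition durfee (l : seq nat) : nat :=
  count (fun i => i <= part l i)%N (iota 1 (size l)).

(* modified Frobenius coordinates (encoded half-integers):               *)
(* c_i = lambda_i - i + 1/2  ~>  lambda_i - i,                           *)
(* c*_i = -(lambda'_i - i) - 1/2  ~>  i - lambda'_i - 1.                  *)
Definition Clam (l : seq nat) : {fset int} :=
  ([fset (part l i)%:Z - i%:Z | i in iota 1 (durfee l)]
   `|` [fset i%:Z - (partT l i)%:Z - 1 | i in iota 1 (durfee l)])%fset.

(* A basis vector v_S is an eigenvector of psi_k psi*_k (eigenvalue [k in S])
   and of psi*_k psi_k (eigenvalue [k notin S]), and psi_k, psi*_k change the
   occupation of k by +1, -1.  Hence a word has a nonzero diagonal coefficient
   only if every index occurs equally often in psi and psi*, which gives (ii);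
   for (i) and (iii) the normally ordered words are products of such commuting
   number operators, so <v_S, Xi_aa v_S> is [a in S] for a > 0 and -[a notin S]
   for a < 0, and <v_S, Xi_abba v_S> is minus the product of two such values.
   It remains to see that C_lambda consists of the positive elements of
   S_lambda and the negative elements of its complement; the latter because
   {lambda_j - j} and {i - lambda'_i - 1} (i, j >= 1) are complementary. *)

From HB Require Import structures.
From mathcomp Require Import all_boot all_order all_algebra.
From mathcomp Require Import finmap zify ring.
Import Order.TTheory GRing.Theory Num.Theory.
Set Implicit Arguments. Unset Strict Implicit. Unset Printing Implicit Defensive.
Local Open Scope ring_scope.

Lemma memS_toggle D k x : memS (toggle D k) x = memS D x (+) (x == k).
Proof.
rewrite /memS /toggle; case: ifP => kD; rewrite !inE;
by case: (x =P k) => [->|_] //=; rewrite ?kD ?addbT ?addbF ?negbK.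
Qed.

Lemma toggleK D k : toggle (toggle D k) k = D.
Proof.
rewrite /toggle; case kD: (k \in D); rewrite !inE ?eqxx ?kD /=;
by apply/fsetP => x; rewrite !inE; case: (x =P k) => [->|].
Qed.

Section CountAbove.

Let window (k : int) (M : nat) := [seq k + 1 + i%:Z | i <- iota 0 M].

(* Beyond the window of [cntAbove] there are no elements of S, so any longer
   window gives the same count. *)
Lemma cntAbove_window (D : state) k M :
  (maxn (\max_(d <- D) `|d - k|%N) `|k|%N <= M)%N ->
  cntAbove D k = count (memS D) (window k M).
Proof.
rewrite /cntAbove /window; set N := maxn _ _ => leNM.
rewrite -(subnKC leNM) iotaD map_cat count_cat add0n -[LHS]addn0; congr (_ + _)%N.
apply/esym/eqP; rewrite -leqn0 leqNgt -has_count; apply/hasPn => x /mapP [i].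
rewrite mem_iota => /andP [leNi _] ->.
have leDN : (\max_(d <- D) `|d - k|%N <= N)%N by rewrite leq_maxl.
have lekN : (`|k|%N <= N)%N by rewrite leq_maxr.
rewrite /memS (_ : k + 1 + i%:Z < 0 = false) /=; last by lia.
apply/negP => xD.
have : (`|(k + 1 + i%:Z - k)%R|%N <= \max_(d <- D) `|(d - k)%R|%N)%N.
  exact: (@leq_bigmax_seq _ _ xpredT (fun d : int => `|d - k|%N)).
by move/leq_trans/(_ leDN); lia.
Qed.

Lemma eq_cntAbove (D D' : state) k : (forall x, k < x -> memS D x = memS D' x) ->
  cntAbove D k = cntAbove D' k.
Proof.
move=> eqDD'; set M := maxn (maxn (\max_(d <- D) `|d - k|%N) `|k|%N)
                            (maxn (\max_(d <- D') `|d - k|%N) `|k|%N).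
rewrite (@cntAbove_window D k M) ?leq_maxl // (@cntAbove_window D' k M) ?leq_maxr //.
by apply: eq_in_count => _ /mapP [i _ ->]; apply: eqDD'; lia.
Qed.

End CountAbove.

Lemma cntAbove_toggle D k : cntAbove (toggle D k) k = cntAbove D k.
Proof.
by apply: eq_cntAbove => x ltkx; rewrite memS_toggle (_ : x == k = false) ?addbF //; lia.
Qed.

Lemma mulr_signK (c : int) n : c * (-1) ^+ n * (-1) ^+ n = c.
Proof. by rewrite -mulrA -expr2 sqrr_sign mulr1. Qed.

Lemma act_Psi_PsiS k c D :
  act (Psi k) (act (PsiS k) (Some (c, D))) = if memS D k then Some (c, D) else None.
Proof.
rewrite /=; case: ifP => //= Dk.
by rewrite memS_toggle Dk eqxx /= toggleK cntAbove_toggle mulr_signK.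
Qed.

Lemma act_PsiS_Psi k c D :
  act (PsiS k) (act (Psi k) (Some (c, D))) = if memS D k then None else Some (c, D).
Proof.
rewrite /=; case: ifP => //= Dk.
by rewrite memS_toggle Dk eqxx /= toggleK cntAbove_toggle mulr_signK.
Qed.

Definition op_index (o : op) : int := match o with Psi k | PsiS k => k end.

Lemma act_toggle o c D c' D' :
  act o (Some (c, D)) = Some (c', D') -> D' = toggle D (op_index o).
Proof. by case: o => k /=; case: ifP => _ // [_ <-]. Qed.

Lemma memS_act o c D c' D' k : op_index o != k ->
  act o (Some (c, D)) = Some (c', D') -> memS D' k = memS D k.
Proof.
move=> ok /act_toggle ->.
by rewrite memS_toggle eq_sym (negbTE ok) addbF.
Qed.

Lemma apply_word_cons o w D : apply_word (o :: w) D = act o (apply_word w D).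
Proof. by []. Qed.

Lemma diag_elem_pair_PsiPsiS D k : diag_elem [:: Psi k; PsiS k] D = (memS D k)%:R.
Proof. by rewrite /diag_elem !apply_word_cons act_Psi_PsiS; case: ifP; rewrite ?eqxx. Qed.

Lemma diag_elem_pair_PsiSPsi D k : diag_elem [:: PsiS k; Psi k] D = (~~ memS D k)%:R.
Proof. by rewrite /diag_elem !apply_word_cons act_PsiS_Psi; case: ifP; rewrite ?eqxx. Qed.

Lemma diag_elem_insert_PsiPsiS D o1 o4 k : op_index o4 != k ->
  diag_elem [:: o1; Psi k; PsiS k; o4] D = (memS D k)%:R * diag_elem [:: o1; o4] D.
Proof.
move=> o4k; rewrite /diag_elem !apply_word_cons.
case E: (act o4 _) => [[c D1]|]; last by rewrite mulr0.
rewrite act_Psi_PsiS (memS_act o4k E).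
by case: (memS D k); rewrite ?mul1r ?mul0r.
Qed.

Lemma diag_elem_insert_PsiSPsi D o1 o4 k : op_index o4 != k ->
  diag_elem [:: o1; PsiS k; Psi k; o4] D = (~~ memS D k)%:R * diag_elem [:: o1; o4] D.
Proof.
move=> o4k; rewrite /diag_elem !apply_word_cons.
case E: (act o4 _) => [[c D1]|]; last by rewrite mulr0.
rewrite act_PsiS_Psi (memS_act o4k E).
by case: (memS D k); rewrite ?mul1r ?mul0r.
Qed.

Definition xi_diag (D : state) (a : int) : int :=
  if halfpos a then (memS D a)%:R else - (~~ memS D a)%:R.

Lemma normal_diag_Xi2 D a : normal_diag (Xi2 a a) D = xi_diag D a.
Proof.
rewrite /normal_diag /normal_word /xi_diag /=; case: (halfpos a) => /=.
- by rewrite diag_elem_pair_PsiPsiS mul1r.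
- by rewrite diag_elem_pair_PsiSPsi mulN1r.
Qed.

Lemma normal_diag_Xi4_abba D a b : a != b ->
  normal_diag (Xi4 a b b a) D = - (xi_diag D a * xi_diag D b).
Proof.
move=> neq_ab; have neq_ba : b != a by rewrite eq_sym.
rewrite /normal_diag /normal_word /xi_diag.
case ha: (halfpos a); case hb: (halfpos b); rewrite /= ?ha ?hb /=.
- by rewrite diag_elem_insert_PsiPsiS // diag_elem_pair_PsiPsiS; ring.
- by rewrite diag_elem_insert_PsiSPsi // diag_elem_pair_PsiPsiS; ring.
- by rewrite diag_elem_insert_PsiSPsi // diag_elem_pair_PsiPsiS; ring.
- by rewrite diag_elem_insert_PsiSPsi // diag_elem_pair_PsiSPsi; ring.
Qed.

Definition op_charge (k : int) (o : op) : int :=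
  match o with
  | Psi k' => (k' == k)%:R
  | PsiS k' => - (k' == k)%:R
  end.

Definition word_charge (k : int) (w : seq op) : int := \sum_(o <- w) op_charge k o.

Lemma word_charge_normal k w : word_charge k (normal_word w) = word_charge k w.
Proof. by rewrite /word_charge big_cat !big_filter [in RHS](bigID is_creation). Qed.

Lemma memS_apply_word w D c D' k : apply_word w D = Some (c, D') ->
  (memS D' k)%:R = (memS D k)%:R + word_charge k w :> int.
Proof.
elim: w c D' => [|o w IHw] c D' /=; first by case=> _ <-; rewrite /word_charge big_nil addr0.
rewrite -/(apply_word w D) /word_charge big_cons -/(word_charge k w).
case E: (apply_word w D) => [[c1 D1]|] //=.
have {}IHw := IHw _ _ E.
case: o => k' /=; case: ifP => D1k' // [_ <-]; rewrite memS_toggle.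
all: case: (eqVneq k k') IHw => [->|nkk'] IHw; last by rewrite addbF mulr0n ?oppr0 add0r IHw.
all: by rewrite addrCA -IHw D1k' /= ?addr0 ?addNr.
Qed.

Lemma normal_diag_charge w D k : normal_diag w D != 0 -> word_charge k w = 0.
Proof.
rewrite /normal_diag mulf_eq0 negb_or => /andP [_]; rewrite /diag_elem.
case E: (apply_word _ D) => [[c D']|]; last by rewrite eqxx.
case: (D' =P D) => [eqD'D _ | _]; last by rewrite eqxx.
have := memS_apply_word k E; rewrite eqD'D word_charge_normal.
by move/esym/eqP; rewrite addrC -subr_eq0 addrK => /eqP.
Qed.

Lemma normal_diag_Xi4_neq0 D a b c d : normal_diag (Xi4 a b c d) D != 0 ->
  ((a == b) && (c == d)) || ((a == d) && (b == c)).
Proof.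
move=> nz; have := normal_diag_charge a nz; have := normal_diag_charge c nz.
rewrite /word_charge /Xi4 !big_cons !big_nil /= !eqxx.
have [<-|neq_ab] := eqVneq a b; rewrite ?eqxx /=.
  by case: eqVneq; lia.
have [<-|neq_ad] := eqVneq a d; rewrite ?eqxx /=; last by case: eqVneq; lia.
by case: eqVneq; case: eqVneq; lia.
Qed.

Lemma leq_nth_count (s : seq nat) i j : sorted geq s -> (0 < i)%N ->
  (i <= nth 0%N s j)%N = (j < count (fun x => i <= x)%N s)%N.
Proof.
elim: s j => [|x s IHs] j /= sorted_xs i_gt0; first by rewrite nth_nil; lia.
have s_le_x := order_path_min (rev_trans leq_trans) sorted_xs.
have [lexi | ltxi] := leqP i x.
  by case: j => [|j] //=; rewrite IHs ?(path_sorted sorted_xs).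
have -> : count (fun y => i <= y)%N s = 0%N.
  apply/eqP; rewrite -leqn0 leqNgt -has_count; apply/hasPn => y ys.
  by have /= := allP s_le_x y ys; lia.
case: j => [|j] /=; first by lia.
have [ltjs | /(nth_default 0%N) ->] := ltnP j (size s); last by lia.
by have /= := allP s_le_x _ (mem_nth 0%N ltjs); lia.
Qed.

Lemma count_iota_downclosed (P : pred nat) n i :
  (forall j k, (0 < j <= k)%N -> P k -> P j) -> (0 < i <= n)%N ->
  (i <= count P (iota 1 n))%N = P i.
Proof.
move=> downP /andP [i_gt0 le_in]; have [Pi | nPi] := boolP (P i).
  rewrite -(subnKC le_in) iotaD count_cat.
  have -> : count P (iota 1 i) = i.
    apply/eqP; rewrite -{2}(size_iota 1 i) -all_count; apply/allP => j.
    by rewrite mem_iota => j_range; apply: downP Pi; lia.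
  exact: leq_addr.
have le_i1n : (i.-1 <= n)%N by lia.
rewrite -(subnKC le_i1n) iotaD count_cat.
have -> : count P (iota (1 + i.-1) (n - i.-1)) = 0%N.
  apply/eqP; rewrite -leqn0 leqNgt -has_count; apply/hasPn => j.
  rewrite mem_iota => j_range; apply: contra nPi; apply: downP; lia.
by have := count_size P (iota 1 i.-1); rewrite size_iota; lia.
Qed.

Lemma exists_pred_switch (P : pred nat) m : P 0%N -> ~~ P m -> exists2 t, P t & ~~ P t.+1.
Proof.
elim: m => [|m IHm] P0 nPm; first by rewrite P0 in nPm.
by case Pm: (P m); [exists m | apply: IHm; rewrite ?Pm].
Qed.

Lemma part_default l j : (size l < j)%N -> part l j = 0%N.
Proof. by move=> lt_size_j; rewrite /part nth_default //; lia. Qed.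

Lemma memSlamP l n :
  reflect (exists2 j, (0 < j)%N & (part l j)%:Z - j%:Z = n) (memSlam l n).
Proof.
apply: (iffP orP) => [[/hasP [j] | /andP [n_lt0 size_lt]] | [j j_gt0 <-]].
- by rewrite mem_iota => j_range /eqP; exists j => //; lia.
- by exists `|n|%N; [lia | rewrite part_default; lia].
- have [le_j_size | lt_size_j] := leqP j (size l).
    by left; apply/hasP; exists j; rewrite ?mem_iota ?eqxx //; lia.
  by right; rewrite part_default //; lia.
Qed.

Lemma leq_part_sumn l j : (part l j <= sumn l)%N.
Proof.
rewrite /part; elim: l j.-1 => [|x s IHs] [|k] //=.
- exact: leq_addr.
- exact: leq_trans (IHs k) (leq_addl _ _).
Qed.

Lemma memS_Slam l n : memS (Slam l) n = memSlam l n.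
Proof.
rewrite /memS /Slam in_fset inE; set window := [seq _ | _ <- _].
have [n_in | n_notin] := boolP (n \in window); first by case: memSlam; case: (n < 0).
rewrite addbF; have [lt_n_size | lt_sum_n] : n < - (size l)%:Z \/ (sumn l)%:Z < n.
- case: (ltrP n (- (size l)%:Z)) => [|ge_n_size]; first by left.
  case: (ltrP (sumn l)%:Z n) => [|le_n_sum]; first by right.
  case/negP: n_notin; apply/mapP; exists `|(n + (size l)%:Z)%R|%N; rewrite ?mem_iota; lia.
- have n_lt0 : n < 0 by lia.
  by rewrite /memSlam n_lt0 (_ : (size l)%:Z < - n) ?orbT //; lia.
- rewrite (_ : n < 0 = false); last by lia.
  apply/esym/negbTE/memSlamP => -[j _ eq_n].
  by have := leq_part_sumn l j; lia.
Qed.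

Section Partition.

Variable l : seq nat.
Hypothesis l_partition : is_partition l.

Lemma leq_part_partT i j : (0 < i)%N -> (0 < j)%N ->
  (i <= part l j)%N = (j <= partT l i)%N.
Proof. by move=> i_gt0; case: j => // j _; rewrite /part /partT leq_nth_count. Qed.

Lemma part_monotone j k : (0 < j <= k)%N -> (part l k <= part l j)%N.
Proof.
move=> /andP [j_gt0 le_jk]; have k_gt0 : (0 < k)%N by lia.
case E: (part l k) => [//|i].
by rewrite leq_part_partT //; apply: leq_trans le_jk _; rewrite -leq_part_partT ?E.
Qed.

Lemma leq_durfee i : (0 < i)%N -> (i <= durfee l)%N = (i <= part l i)%N.
Proof.
move=> i_gt0; have [le_i_size | lt_size_i] := leqP i (size l).
  rewrite /durfee count_iota_downclosed ?i_gt0 //.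
  move=> j k jk_range /= le_k_part; case/andP: (jk_range) => _ le_jk.
  exact: leq_trans le_jk (leq_trans le_k_part (part_monotone jk_range)).
rewrite part_default // leqn0 (gtn_eqF i_gt0) /durfee.
apply/negbTE; rewrite -ltnNge; apply: leq_ltn_trans lt_size_i.
by rewrite -[leqRHS](size_iota 1) count_size.
Qed.

Lemma leq_durfee_partT i : (0 < i)%N -> (i <= durfee l)%N = (i <= partT l i)%N.
Proof. by move=> i_gt0; rewrite leq_durfee // leq_part_partT. Qed.

Lemma cstar_notin_Slam i : (0 < i)%N ->
  ~~ memSlam l (i%:Z - (partT l i)%:Z - 1).
Proof.
move=> i_gt0; apply/memSlamP => -[j j_gt0].
have [le_j_partT | lt_partT_j] := leqP j (partT l i).
  by have := le_j_partT; rewrite -leq_part_partT //; lia.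
by have := lt_partT_j; rewrite ltnNge -leq_part_partT // -ltnNge; lia.
Qed.

Lemma notin_Slam_cstar n : n < 0 -> ~~ memSlam l n ->
  exists2 i, (0 < i)%N & i%:Z - (partT l i)%:Z - 1 = n.
Proof.
(* lambda_j - j strictly decreases, is above n at j = |n| and below n for
   large j; where it jumps over n, from j = |n| + t to j + 1, we get
   lambda'_(t+1) = |n| + t. *)
move=> n_lt0 n_notin; set m := `|n|%N.
have coord_neq j : (0 < j)%N -> (part l j)%:Z - j%:Z != n.
  by move=> j_gt0; apply: contra n_notin => /eqP eq_n; apply/memSlamP; exists j.
pose above t := n < (part l (m + t))%:Z - (m + t)%:Z.
have above0 : above 0%N by rewrite /above addn0; have := coord_neq m; lia.
have not_above_size : ~~ above (size l).+1 by rewrite /above part_default; lia.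
have [t above_t not_above_t1] := exists_pred_switch above0 not_above_size.
have := coord_neq (m + t).+1 isT; rewrite /above addnS in above_t not_above_t1 *.
move=> neq_t1; have m_gt0 : (0 < m)%N by lia.
have partT_t1 : partT l t.+1 = (m + t)%N.
  by apply/eqP; rewrite eqn_leq leqNgt -!leq_part_partT ?addn_gt0 ?m_gt0 // -ltnNge; lia.
by exists t.+1; rewrite // partT_t1; lia.
Qed.

Lemma mem_Clam_nonneg n : 0 <= n -> (n \in Clam l) = memSlam l n.
Proof.
move=> n_ge0; apply/idP/idP.
  case/fsetUP => /imfsetP [i /=]; rewrite mem_iota add1n ltnS => /andP [i_gt0 le_i_d] eq_n.
    by apply/memSlamP; exists i.
  by move: le_i_d; rewrite leq_durfee_partT //; lia.
case/memSlamP => j j_gt0 eq_n; apply/fsetUP; left; apply/imfsetP; exists j => //=.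
by rewrite mem_iota add1n ltnS j_gt0 leq_durfee //=; lia.
Qed.

Lemma mem_Clam_neg n : n < 0 -> (n \in Clam l) = ~~ memSlam l n.
Proof.
move=> n_lt0; apply/idP/idP.
  case/fsetUP => /imfsetP [i /=]; rewrite mem_iota add1n ltnS => /andP [i_gt0 le_i_d] eq_n.
    by move: le_i_d; rewrite leq_durfee //; lia.
  by rewrite eq_n cstar_notin_Slam.
case/(notin_Slam_cstar n_lt0) => i i_gt0 eq_n; apply/fsetUP; right.
apply/imfsetP; exists i => //=.
by rewrite mem_iota add1n ltnS i_gt0 leq_durfee_partT //=; lia.
Qed.

End Partition.

Lemma sum_indicator_uniq (R : pzSemiRingType) (T : eqType) (s : seq T) (F : T -> R) a :
  uniq s ->
  \sum_(x <- s) F x * (a == x)%:R = if a \in s then F a else 0.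
Proof.
elim: s => [|x s IHs] /=; first by rewrite big_nil.
case/andP => x_notin_s /IHs {}IHs; rewrite big_cons IHs in_cons.
by case: eqVneq => [->|_] /=; rewrite ?(negbTE x_notin_s) ?mulr1 ?addr0 ?mulr0 ?add0r.
Qed.

Lemma xi_diag_Slam l a : is_partition l ->
  xi_diag (Slam l) a = \sum_(x <- Clam l) sgnF x * (a == x)%:R.
Proof.
move=> l_partition; rewrite sum_indicator_uniq ?fset_uniq // /xi_diag memS_Slam /sgnF /halfpos.
have [a_ge0 | a_lt0] := lerP 0 a.
  by rewrite mem_Clam_nonneg //; case: memSlam.
by rewrite mem_Clam_neg //; case: memSlam.
Qed.

Theorem proposition3 (l : seq nat) (Hl : is_partition l) (a b c d : int) :
  [/\ normal_diag (Xi2 a a) (Slam l)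
        = \sum_(x <- Clam l) sgnF x * (a == x)%:R,
      normal_diag (Xi4 a b c d) (Slam l) != 0 ->
        ((a == b) && (c == d)) || ((a == d) && (b == c))
    & a != b ->
      normal_diag (Xi4 a b b a) (Slam l)
        = - \sum_(x <- Clam l) \sum_(x' <- Clam l)
              sgnF x * sgnF x' * (a == x)%:R * (b == x')%:R ].
Proof.
split.
- by rewrite normal_diag_Xi2 xi_diag_Slam.
- exact: normal_diag_Xi4_neq0.
- move=> neq_ab; rewrite normal_diag_Xi4_abba // !xi_diag_Slam // mulr_suml.
  congr (- _); apply: eq_bigr => x _; rewrite mulr_sumr.
  by apply: eq_bigr => x' _; rewrite mulrACA mulrA.
Qed.
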